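(* The map $B\mapsto I(B)$, sending a bridge (a nondecreasing càdlàg function $[0,1]\to[0,1]$ of the bridge form) to its interval-partition, is continuous when bridges are endowed with the Skorohod topology and interval-partitions with the Hausdorff distance between complements $d_H$.
   Context: A bridge is a function $B:[0,1]\to[0,1]$ of the form $B(x)=x(1-\sum_i\beta_i)+\sum_i\beta_i\mathbf 1_{\{v_i\le x\}}$ with $\beta_1\ge\beta_2\ge\dots\ge0$, $\sum\beta_i\le1$, and $v_i\in[0,1]$. $I(B)=\operatorname{int}([0,1]\setminus B([0,1]))$, where $B([0,1])$ is the range of $B$. For open subsets $I,\tilde I$ of $(0,1)$, $d_H(I,\tilde I)=\sup_{x\notin I}d(x,[0,1]\setminus\tilde I)\vee\sup_{x\notin\tilde I}d(x,[0,1]\setminus I)$ (complements taken in $[0,1]$). *)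

From Stdlib Require Import Reals Lra.
Open Scope R_scope.

Definition unit_int (x : R) : Prop := 0 <= x <= 1.

Definition ind_le (v x : R) : R := if Rle_dec v x then 1 else 0.

(* B is a bridge:  B(x) = x(1 - sum beta_i) + sum_i beta_i 1_{v_i <= x}  on [0,1],
   with beta_1 >= beta_2 >= ... >= 0, sum beta_i <= 1, v_i in [0,1].
   (Finitely many atoms are covered by beta_i = 0 eventually.) *)
Definition is_bridge (B : R -> R) : Prop :=
  exists (beta v : nat -> R) (Sb : R),
    (forall i, 0 <= beta i) /\
    (forall i, beta (S i) <= beta i) /\
    infinite_sum beta Sb /\ Sb <= 1 /\
    (forall i, unit_int (v i)) /\
    (forall x, unit_int x ->
       infinite_sum (fun i => beta i * ind_le (v i) x) (B x - x * (1 - Sb))).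

Definition range01 (B : R -> R) (y : R) : Prop := exists x, unit_int x /\ B x = y.

Definition IB (B : R -> R) (y : R) : Prop :=
  exists r, 0 < r /\ forall z, Rabs (z - y) < r -> unit_int z /\ ~ range01 B z.

Definition compl01 (I : R -> Prop) (x : R) : Prop := unit_int x /\ ~ I x.

Definition dist_le (x : R) (S : R -> Prop) (e : R) : Prop :=
  forall eta, 0 < eta -> exists y, S y /\ Rabs (x - y) < e + eta.

Definition dH_le (I J : R -> Prop) (e : R) : Prop :=
  (forall x, compl01 I x -> dist_le x (compl01 J) e) /\
  (forall x, compl01 J x -> dist_le x (compl01 I) e).

Definition homeo01 (l : R -> R) : Prop :=
  l 0 = 0 /\ l 1 = 1 /\
  (forall x y, unit_int x -> unit_int y -> x < y -> l x < l y) /\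
  (forall x, unit_int x -> continuity_pt l x).

Definition skorohod_le (f g : R -> R) (d : R) : Prop :=
  forall eta, 0 < eta -> exists l, homeo01 l /\
    forall x, unit_int x ->
      Rabs (l x - x) <= d + eta /\ Rabs (f x - g (l x)) <= d + eta.

From Stdlib Require Import Reals.
From Stdlib Require Import Lra Ranalysis5 Classical.
Open Scope R_scope.

(* Continuity of B |-> I(B), in the quantitative form d_H(I(B), I(B')) <= d_S(B, B').

   The complement of I(B) in [0,1] is the closure of the range of B together
   with the endpoints 0 and 1: a point of [0,1] outside I(B) is a limit of
   points that lie in B([0,1]) or outside [0,1].  Hence, to bring a point x
   of [0,1] \ I(B) close to [0,1] \ I(B'), it suffices to bring every value
   B(x0) close to some value B'(w) (points outside [0,1] are handled by the
   endpoints, which never lie in I(B')).  A Skorohod bound d provides exactly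
   this, in both directions: B(x0) is d-close to B'(l x0), and B'(w) is
   d-close to B(x1) for the preimage x1 of w under the time change l. *)

Lemma const_cv (c : R) : Un_cv (fun _ : nat => c) c.
Proof.
  intros e He; exists 0%nat; intros n _.
  unfold Rdist; rewrite Rminus_diag, Rabs_R0; lra.
Qed.

Lemma series_le (a b : nat -> R) (A Bs : R) :
  (forall i, a i <= b i) -> infinite_sum a A -> infinite_sum b Bs -> A <= Bs.
Proof.
  intros Hab HA HB.
  apply (@Rle_cv_lim (sum_f_R0 a) (sum_f_R0 b)); auto.
  intro n; apply sum_Rle; auto.
Qed.

Lemma series_nonneg (a : nat -> R) (A : R) :
  (forall i, 0 <= a i) -> infinite_sum a A -> 0 <= A.
Proof.
  intros Ha HA.
  apply (@Rle_cv_lim (fun _ => 0) (sum_f_R0 a)); [| apply const_cv | exact HA].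
  intro n; apply cond_pos_sum; exact Ha.
Qed.

(* A bridge maps [0,1] into [0,1]: the jump part lies in [0, Sb] and the
   drift part x (1 - Sb) in [0, 1 - Sb]. *)
Lemma bridge_maps_unit (B : R -> R) :
  is_bridge B -> forall x, unit_int x -> unit_int (B x).
Proof.
  intros [beta [v [Sb [Hpos [_ [Hsum [HSb1 [_ HB]]]]]]]] x Hx.
  assert (Hjump_nonneg : forall i, 0 <= beta i * ind_le (v i) x).
  { intro i; unfold ind_le; destruct (Rle_dec (v i) x); specialize (Hpos i); nra. }
  assert (Hjump_le : forall i, beta i * ind_le (v i) x <= beta i).
  { intro i; unfold ind_le; destruct (Rle_dec (v i) x); specialize (Hpos i); nra. }
  pose proof (series_nonneg _ _ Hjump_nonneg (HB x Hx)) as Hlow.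
  pose proof (series_le _ _ _ _ Hjump_le (HB x Hx) Hsum) as Hup.
  unfold unit_int in *; nra.
Qed.

Lemma homeo01_maps_unit (l : R -> R) :
  homeo01 l -> forall x, unit_int x -> unit_int (l x).
Proof.
  intros [L0 [L1 [Lmono _]]] x Hx.
  assert (H0 : unit_int 0) by (unfold unit_int; lra).
  assert (H1 : unit_int 1) by (unfold unit_int; lra).
  unfold unit_int in Hx.
  destruct (Req_dec x 0) as [->|Hx0]; [unfold unit_int; lra|].
  destruct (Req_dec x 1) as [->|Hx1]; [unfold unit_int; lra|].
  pose proof (Lmono 0 x H0 Hx ltac:(lra)).
  pose proof (Lmono x 1 Hx H1 ltac:(lra)).
  unfold unit_int; lra.
Qed.

Lemma homeo01_onto (l : R -> R) :
  homeo01 l -> forall w, unit_int w -> exists x, unit_int x /\ l x = w.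
Proof.
  intros [L0 [L1 [_ Lcont]]] w [Hw0 Hw1].
  destruct (Req_dec w 0) as [->|Hw0']; [exists 0; split; [unfold unit_int; lra | auto]|].
  destruct (Req_dec w 1) as [->|Hw1']; [exists 1; split; [unfold unit_int; lra | auto]|].
  destruct (IVT_interv (fun t => l t - w) 0 1) as [z [Hz Hlz]].
  - intros a Ha; apply continuity_pt_minus; [apply Lcont, Ha | apply continuity_pt_const].
    intros u u'; reflexivity.
  - lra.
  - rewrite L0; lra.
  - rewrite L1; lra.
  - exists z; split; [exact Hz | lra].
Qed.

Lemma range_not_IB (B : R -> R) (y : R) : range01 B y -> ~ IB B y.
Proof.
  intros Hy [r [Hr Hball]].
  apply (Hball y); [rewrite Rminus_diag, Rabs_R0; lra | exact Hy].
Qed.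

(* The endpoints are never in I(B): every neighbourhood leaves [0,1]. *)
Lemma endpoint_not_IB (B : R -> R) (y : R) : y = 0 \/ y = 1 -> ~ IB B y.
Proof.
  intros [-> | ->] [r [Hr Hball]].
  - destruct (Hball (- (r / 2))) as [[Hneg _] _]; [| lra].
    rewrite Rminus_0_r, Rabs_Ropp, Rabs_right; lra.
  - destruct (Hball (1 + r / 2)) as [[_ Hbig] _]; [| lra].
    replace (1 + r / 2 - 1) with (r / 2) by ring; rewrite Rabs_right; lra.
Qed.

Lemma compl_IB_approx (B : R -> R) (x r : R) :
  compl01 (IB B) x -> 0 < r ->
  exists z, Rabs (z - x) < r /\ (~ unit_int z \/ range01 B z).
Proof.
  intros [_ HnotI] Hr.
  apply NNPP; intro Hnone; apply HnotI.
  exists r; split; [exact Hr|].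
  intros z Hz; split.
  - apply NNPP; intro Hu; apply Hnone; exists z; auto.
  - intro Hrange; apply Hnone; exists z; auto.
Qed.

Definition values_near (B B' : R -> R) (d : R) : Prop :=
  forall eta, 0 < eta -> forall x0, unit_int x0 ->
    exists w, unit_int w /\ Rabs (B x0 - B' w) <= d + eta.

(* Approximate x
   by a point z outside [0,1] (then the nearest endpoint works) or by a value
   B(x0) (then the nearby value B'(w) works). *)
Lemma compl_IB_dist_le (B B' : R -> R) (d : R) :
  0 <= d -> (forall w, unit_int w -> unit_int (B' w)) -> values_near B B' d ->
  forall x, compl01 (IB B) x -> dist_le x (compl01 (IB B')) d.
Proof.
  intros Hd HB' Hnear x Hx eta Heta.
  assert (Hx01 : unit_int x) by apply Hx.
  destruct (compl_IB_approx B x (eta / 2) Hx ltac:(lra)) as [z [Hzx [Hout | Hrange]]].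
  - unfold unit_int in Hout, Hx01.
    destruct (Rlt_or_le z 0) as [Hz0 | Hz0].
    + exists 0; split.
      * split; [unfold unit_int; lra | apply endpoint_not_IB; auto].
      * rewrite Rabs_left in Hzx by lra; rewrite Rminus_0_r, Rabs_right; lra.
    + assert (Hz1 : 1 < z) by (destruct (Rle_dec z 1); [exfalso; apply Hout; lra | lra]).
      exists 1; split.
      * split; [unfold unit_int; lra | apply endpoint_not_IB; auto].
      * rewrite Rabs_right in Hzx by lra; rewrite Rabs_left1; lra.
  - destruct Hrange as [x0 [Hx0 <-]].
    destruct (Hnear (eta / 4) ltac:(lra) x0 Hx0) as [w [Hw Hclose]].
    exists (B' w); split.
    + split; [apply HB', Hw | apply range_not_IB; exists w; auto].
    + replace (x - B' w) with (- (B x0 - x) + (B x0 - B' w)) by ring.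
      eapply Rle_lt_trans; [apply Rabs_triang|].
      rewrite Rabs_Ropp; lra.
Qed.

Lemma skorohod_values_near (B B' : R -> R) (d : R) :
  skorohod_le B B' d -> values_near B B' d.
Proof.
  intros Hsk eta Heta x0 Hx0.
  destruct (Hsk eta Heta) as [l [Hl Hbound]].
  exists (l x0); split; [apply homeo01_maps_unit; auto | apply Hbound, Hx0].
Qed.

Lemma skorohod_values_near_sym (B B' : R -> R) (d : R) :
  skorohod_le B B' d -> values_near B' B d.
Proof.
  intros Hsk eta Heta w Hw.
  destruct (Hsk eta Heta) as [l [Hl Hbound]].
  destruct (homeo01_onto l Hl w Hw) as [x1 [Hx1 <-]].
  exists x1; split; [exact Hx1|].
  rewrite Rabs_minus_sym; apply Hbound, Hx1.
Qed.

Lemma IB_skorohod_lipschitz (B B' : R -> R) (d : R) :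
  is_bridge B -> is_bridge B' -> 0 <= d ->
  skorohod_le B B' d -> dH_le (IB B) (IB B') d.
Proof.
  intros HB HB' Hd Hsk; split.
  - apply compl_IB_dist_le; auto.
    + apply bridge_maps_unit, HB'.
    + apply skorohod_values_near, Hsk.
  - apply compl_IB_dist_le; auto.
    + apply bridge_maps_unit, HB.
    + apply skorohod_values_near_sym, Hsk.
Qed.

Theorem mainTheorem14 :
  forall B : R -> R, is_bridge B ->
  forall eps : R, 0 < eps ->
  exists delta : R, 0 < delta /\
    forall B' : R -> R, is_bridge B' ->
      skorohod_le B B' delta -> dH_le (IB B) (IB B') eps.
Proof.
  intros B HB eps Heps.
  exists eps; split; [exact Heps|].
  intros B' HB' Hsk.
  apply IB_skorohod_lipschitz; auto; lra.
Qed.
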